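(* Let $Z=(W,A,X,V,E,S)\sim\mathbb{P}$, where only $(W,A,X)$ is observed. Suppose that for all $j\in\{1,\dots,J\}$: (i) $\mathbb{E}[W_j\mid A,X]=\mathbb{E}[V_jE_jS\mid A,X]$; (ii) $V_j$, $E_j$ and $S$ are mutually independent conditionally on $(A,X)$; (iii) $E_j$ is independent of $(A,X)$; and (iv) $S$ is independent of $(A,X)$. Then for every $j$ the parameter $$\Psi^{(2)}_j(\mathbb{P}):=\log\left(\frac{\mathbb{E}\big[\mathbb{E}[V_j\mid A=1,X]\big]}{\mathbb{E}\big[\mathbb{E}[V_j\mid A=0,X]\big]}\right)$$ is identifiable, where the outer expectations are over the marginal distribution of $X$.
   Context: $W\in\mathbb{R}_{\ge 0}^J$ are observed category levels, $A\in\{0,1\}$ a binary exposure, $X\in\mathcal{X}\subseteq\mathbb{R}^p$ covariates, $V\in\mathbb{R}_{\ge0}^J$ latent true category levels, $E\in\mathbb{R}_{>0}^J$ latent category-specific observabilities, $S\in\mathbb{R}_{>0}$ a latent sample-specific scale; data are i.i.d. from $\mathbb{P}$. The parameter is assumed well defined (numerator and denominator positive and finite). A parameter is identifiable if its value is uniquely determined by the distribution of the observed variables $(W,A,X)$ among distributions satisfying the assumptions. *)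

From HB Require Import structures.
From mathcomp Require Import all_boot all_order all_algebra.
From mathcomp Require Import all_classical all_reals all_analysis.
Set Implicit Arguments. Unset Strict Implicit. Unset Printing Implicit Defensive.
Import Order.TTheory GRing.Theory Num.Theory.
Local Open Scope classical_set_scope.
Local Open Scope ring_scope.

Section defs.
Context {d : measure_display} {Om : measurableType d} {R : realType}.

(* [cexp_version P Y Z g] : g is a version of the conditional expectation
   E_P[Y | Z] in Doob-Dynkin form, i.e. E_P[Y | Z] = g(Z) P-a.s.:
   g is measurable, g(Z) is P-integrable, and for every measurable set B of
   the range of Z,  E_P[Y ; Z in B] = E_P[g(Z) ; Z in B]. *)
Definition cexp_version {d' : measure_display} {T : measurableType d'}
    (P : probability Om R) (Y : Om -> R) (Z : Om -> T) (g : T -> R) : Prop :=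
  [/\ measurable_fun setT g,
      P.-integrable setT (EFin \o (g \o Z)) &
      forall B : set T, measurable B ->
        (\int[P]_(w in Z @^-1` B) (Y w)%:E
         = \int[P]_(w in Z @^-1` B) (g (Z w))%:E)%E].

Definition cond_mutual_indep3 {d' : measure_display} {T : measurableType d'}
    (P : probability Om R) (Y1 Y2 Y3 : Om -> R) (Z : Om -> T) : Prop :=
  forall U1 U2 U3 : set R, measurable U1 -> measurable U2 -> measurable U3 ->
  exists g1 g2 g3 : T -> R,
    [/\ cexp_version P (\1_(Y1 @^-1` U1)) Z g1,
        cexp_version P (\1_(Y2 @^-1` U2)) Z g2,
        cexp_version P (\1_(Y3 @^-1` U3)) Z g3 &
        cexp_version P (\1_(Y1 @^-1` U1 `&` Y2 @^-1` U2 `&` Y3 @^-1` U3)) Z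
          (fun z => g1 z * g2 z * g3 z)].

Definition indep_rv {d' : measure_display} {T : measurableType d'}
    (P : probability Om R) (Y : Om -> R) (Z : Om -> T) : Prop :=
  forall (U : set R) (C : set T), measurable U -> measurable C ->
    P (Y @^-1` U `&` Z @^-1` C) = (P (Y @^-1` U) * P (Z @^-1` C))%E.

Definition observed_events {d' : measure_display} {T : measurableType d'}
    (J : nat) (W : 'I_J -> Om -> R) (A : Om -> bool) (X : Om -> T) : set (set Om) :=
  <<s [set B | (exists j (U : set R), measurable U /\ B = W j @^-1` U)
            \/ (exists b : set bool, B = A @^-1` b)
            \/ (exists C : set T, measurable C /\ B = X @^-1` C)] >>.

Definition same_observed_law {d' : measure_display} {T : measurableType d'}
    (J : nat) (W : 'I_J -> Om -> R) (A : Om -> bool) (X : Om -> T)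
    (P1 P2 : probability Om R) : Prop :=
  forall B, observed_events W A X B -> P1 B = P2 B.

(* "E[ E[Y | A = a, X] ]" computed from a version g of E[Y | (A, X)]: the
   expectation of g(a, X) over the marginal law of X. *)
Definition outer_mean {d' : measure_display} {T : measurableType d'}
    (P : probability Om R) (X : Om -> T) (g : bool * T -> R) (a : bool) : \bar R :=
  (\int[P]_w (g (a, X w))%:E)%E.

Definition psi2_well_defined {d' : measure_display} {T : measurableType d'}
    (P : probability Om R) (Y : Om -> R) (A : Om -> bool) (X : Om -> T) : Prop :=
  exists m1 m0 : R, [/\ 0 < m1, 0 < m0 &
    forall g : bool * T -> R, cexp_version P Y (fun w => (A w, X w)) g ->
      [/\ P.-integrable setT (fun w => (g (true, X w))%:E),
          P.-integrable setT (fun w => (g (false, X w))%:E),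
          outer_mean P X g true = m1%:E & outer_mean P X g false = m0%:E]].

Definition psi2 {d' : measure_display} {T : measurableType d'}
    (P : probability Om R) (X : Om -> T) (g : bool * T -> R) : R :=
  ln (fine (outer_mean P X g true) / fine (outer_mean P X g false)).

Definition model_assumptions {d' : measure_display} {T : measurableType d'}
    (J : nat) (W V E : 'I_J -> Om -> R) (S : Om -> R) (A : Om -> bool) (X : Om -> T)
    (P : probability Om R) : Prop :=
  let Z := fun w => (A w, X w) in
  forall j : 'I_J,
    (* integrability (implicit in the paper) *)
    [/\ P.-integrable setT (EFin \o W j),
        P.-integrable setT (EFin \o V j),
        P.-integrable setT (EFin \o E j),
        P.-integrable setT (EFin \o S) &
        P.-integrable setT (fun w => (V j w * E j w * S w)%:E)] /\
    [/\ exists g, cexp_version P (W j) Z g /\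
                 cexp_version P (fun w => V j w * E j w * S w) Z g,
        cond_mutual_indep3 P (V j) (E j) S Z,
        indep_rv P (E j) Z &
        indep_rv P S Z].

End defs.

(* For every measurable set B of values of (A, X),
     E[W_j; (A, X) in B] = E[V_j E_j S; (A, X) in B] = E[E_j] E[S] E[V_j; (A, X) in B].
   The second equality holds because (ii)-(iv) make the joint law of (V_j, E_j, S) on
   {(A, X) in B} factorise as law(E_j) x law(S) x law(V_j restricted to the event); the
   factorisation passes from indicators to the variables themselves by approximating them
   with simple functions.  Hence E[V_j | A, X] = E[W_j | A, X] / (E[E_j] E[S]), a positive
   constant multiple of a quantity determined by the law of (W, A, X); the constant cancels
   in the ratio defining Psi^(2)_j. *)

From HB Require Import structures.
From mathcomp Require Import all_boot all_order all_algebra.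
From mathcomp Require Import all_classical all_reals all_analysis.
From mathcomp Require Import measurable_realfun ring.
Import Order.TTheory GRing.Theory Num.Theory HBNNSimple.
Set Implicit Arguments. Unset Strict Implicit.
Local Open Scope classical_set_scope.
Local Open Scope ring_scope.

Lemma measurable_preimage {d1 d2 : measure_display}
    {T1 : measurableType d1} {T2 : measurableType d2} (f : T1 -> T2) (U : set T2) :
  measurable_fun setT f -> measurable U -> measurable (f @^-1` U).
Proof. by move=> mf mU; rewrite -[X in measurable X]setTI; exact: mf. Qed.

Lemma integral_mkcond_indic {d : measure_display} {T : measurableType d} {R : realType}
    (mu : {measure set T -> \bar R}) (A : set T) (f : T -> R) :
  (\int[mu]_(x in A) (f x)%:E = \int[mu]_x (\1_A x * f x)%:E)%E.
Proof.
rewrite integral_mkcond; apply: eq_integral => x _.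
by rewrite epatch_indic /= -EFinM mulrC.
Qed.

Section integral_mul_rv.
Context {d : measure_display} {Om : measurableType d} {R : realType}.
Variable P : {measure set Om -> \bar R}.
Local Open Scope ereal_scope.

Lemma integral_mul_nnsfun_comp (Y h : Om -> R) (s : {nnsfun R >-> R}) :
  measurable_fun setT Y -> measurable_fun setT h -> (forall w, 0 <= h w)%R ->
  \int[P]_w (h w * s (Y w))%:E =
  \sum_(r \in range s) r%:E * \int[P]_(w in Y @^-1` (s @^-1` [set r])) (h w)%:E.
Proof.
move=> mY mh h0.
have fin_s : finite_set (range s) by exact: fimfunP.
have mpre r : measurable (Y @^-1` (s @^-1` [set r])).
  exact/measurable_preimage/measurable_funPTI.
have pre_lt0 r : (r < 0)%R -> Y @^-1` (s @^-1` [set r]) = set0.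
  by move=> r0; rewrite preimage_nnfun0 // preimage_set0.
have mhr r : measurable_fun setT (fun w => r * (h w * \1_(Y @^-1` (s @^-1` [set r])) w))%R.
  by do 2 apply: measurable_funM => //; exact: measurable_indic.
transitivity (\int[P]_w (\sum_(r \in range s)
     (r * (h w * \1_(Y @^-1` (s @^-1` [set r])) w))%:E)).
  apply: eq_integral => w _; rewrite fsumEFin //; congr EFin.
  rewrite (fimfunE s (Y w)) mulr_fsumr; apply: eq_fsbigr => r _.
  by rewrite /= !indicE /preimage /= mulrCA.
rewrite ge0_integral_fsum //; first last.
- move=> r w _; rewrite lee_fin; have [r0|r0] := leP 0%R r.
    by rewrite mulr_ge0 // mulr_ge0.
  by rewrite pre_lt0 // indic0 !mulr0.
- by move=> r; exact/measurable_EFinP.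
apply: eq_fsbigr => r _; have [r0|r0] := leP 0%R r; last first.
  rewrite pre_lt0 // integral_set0 mule0; apply: integral0_eq => w _.
  by rewrite indic0 !mulr0.
rewrite (eq_integral (fun w => r%:E * (h w * \1_(Y @^-1` (s @^-1` [set r])) w)%:E));
  last by move=> w _; rewrite EFinM.
have mhr' : measurable_fun setT (fun w => (h w * \1_(Y @^-1` (s @^-1` [set r])) w)%:E).
  by apply/measurable_EFinP/measurable_funM => //; exact: measurable_indic.
rewrite ge0_integralZl_EFin // => [|w _]; last by rewrite lee_fin mulr_ge0.
by rewrite [in RHS]integral_mkcond_indic; congr (_ * _); apply: eq_integral => w _; rewrite mulrC.
Qed.

Let D : set R := `[0%R, +oo[.
Let mD : measurable D. Proof. exact: measurable_itv. Qed.
Let mEFin : measurable_fun D (EFin : R -> \bar R).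
Proof. exact/measurable_EFinP. Qed.
Let approx := nnsfun_approx mD mEFin.

Let nd_approx (h : Om -> R) (Y : Om -> R) : (forall w, 0 <= h w)%R ->
  forall w, {homo (fun n => (h w * approx n (Y w))%:E) : m n / (m <= n)%N >-> m <= n}.
Proof.
move=> h0 w m n mn; rewrite lee_fin ler_wpM2l //.
by have /lefP := nd_nnsfun_approx mD mEFin mn; apply.
Qed.

Lemma integral_mul_approx (Y h : Om -> R) :
  measurable_fun setT Y -> (forall w, 0 <= Y w)%R ->
  measurable_fun setT h -> (forall w, 0 <= h w)%R ->
  \int[P]_w (h w * Y w)%:E = limn (fun n => \int[P]_w (h w * approx n (Y w))%:E).
Proof.
move=> mY Y0 mh h0.
rewrite -monotone_convergence //; first last.
- by move=> w _; exact: nd_approx.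
- by move=> n w _; rewrite lee_fin mulr_ge0.
- by move=> n; apply/measurable_EFinP/measurable_funM => //; exact: measurableT_comp.
apply: eq_integral => w _; apply/esym/cvg_lim => //.
have DY : D (Y w) by rewrite /D /= in_itv /= andbT.
have approx0 x : D x -> (0 <= x%:E) by rewrite /D /= in_itv /= andbT lee_fin.
have := cvg_nnsfun_approx mD mEFin approx0 DY.
move=> /(cvgeZl (y := (h w)%:E) (fin_numE _)).
by under eq_fun do rewrite -EFinM; rewrite -EFinM.
Qed.

Lemma integral_mul_scale_from_preimages (Y h h' : Om -> R) (k : R) :
  measurable_fun setT Y -> (forall w, 0 <= Y w)%R ->
  measurable_fun setT h -> (forall w, 0 <= h w)%R ->
  measurable_fun setT h' -> (forall w, 0 <= h' w)%R -> (0 <= k)%R ->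
  (forall U, measurable U -> \int[P]_(w in Y @^-1` U) (h w)%:E
       = k%:E * \int[P]_(w in Y @^-1` U) (h' w)%:E) ->
  \int[P]_w (h w * Y w)%:E = k%:E * \int[P]_w (h' w * Y w)%:E.
Proof.
move=> mY Y0 mh h0 mh' h'0 k0 hk.
have approx_eq n : \int[P]_w (h w * approx n (Y w))%:E =
    k%:E * \int[P]_w (h' w * approx n (Y w))%:E.
  rewrite !integral_mul_nnsfun_comp // ge0_mule_fsumr; last first.
    move=> r; have [r0|r0] := leP 0%R r.
      by rewrite mule_ge0 ?lee_fin // integral_ge0 // => w _; rewrite lee_fin.
    by rewrite preimage_nnfun0 // preimage_set0 integral_set0 mule0.
  apply: eq_fsbigr => r _; rewrite hk ?measurable_funPTI //; exact: muleCA.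
rewrite (integral_mul_approx mY) // (integral_mul_approx mY) //.
under eq_fun do rewrite approx_eq.
rewrite limeMl //; apply: ereal_nondecreasing_is_cvgn => m n mn.
apply: ge0_le_integral => //.
- by move=> w _; rewrite lee_fin mulr_ge0.
- by apply/measurable_EFinP/measurable_funM => //; exact: measurableT_comp.
- by apply/measurable_EFinP/measurable_funM => //; exact: measurableT_comp.
- by move=> w _; exact: nd_approx.
Qed.
End integral_mul_rv.

Section factorization.
Context {d : measure_display} {Om : measurableType d} {R : realType}.
Variables (P : probability Om R) (V E S : Om -> R) (F : set Om).
Hypotheses (mV : measurable_fun setT V) (mE : measurable_fun setT E)
  (mS : measurable_fun setT S) (mF : measurable F).
Hypotheses (V0 : forall w, 0 <= V w) (E0 : forall w, 0 <= E w) (S0 : forall w, 0 <= S w).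
Hypotheses (iE : P.-integrable setT (EFin \o E)) (iS : P.-integrable setT (EFin \o S)).
Hypothesis joint : forall U1 U2 U3, measurable U1 -> measurable U2 -> measurable U3 ->
  P (V @^-1` U1 `&` E @^-1` U2 `&` S @^-1` U3 `&` F) =
  (P (E @^-1` U2) * P (S @^-1` U3) * P (V @^-1` U1 `&` F))%E.
Local Open Scope ereal_scope.

(* Integration lemmas return [P] through its measure coercion, which [rewrite] does not
   identify with the probability coercion used in [joint]. *)
Let measure_of_probabilityE (A : set Om) : (P : {measure set Om -> \bar R}) A = P A.
Proof. by []. Qed.

Let finite_measure (A : set Om) : measurable A -> P A = (fine (P A))%:E.
Proof. by move=> mA; rewrite fineK // fin_num_measure. Qed.

Let integral_one (A : set Om) : measurable A -> \int[P]_(w in A) (1%R)%:E = P A.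
Proof. by move=> mA; rewrite integral_cst // mul1e. Qed.

Let indicM (A B : set Om) (w : Om) : (\1_A w * \1_B w = \1_(A `&` B) w :> R)%R.
Proof. by rewrite indicI. Qed.

Let joint2 (U1 U2 : set R) : measurable U1 -> measurable U2 ->
  P (V @^-1` U1 `&` E @^-1` U2 `&` F) = P (E @^-1` U2) * P (V @^-1` U1 `&` F).
Proof.
move=> mU1 mU2; have := joint mU1 mU2 measurableT.
by rewrite preimage_setT setIT probability_setT mule1.
Qed.

Let cE := fine (\int[P]_w (E w)%:E).
Let cS := fine (\int[P]_w (S w)%:E).
Let cE0 : (0 <= cE)%R.
Proof. by apply: fine_ge0; apply: integral_ge0 => w _; rewrite lee_fin. Qed.
Let cS0 : (0 <= cS)%R.
Proof. by apply: fine_ge0; apply: integral_ge0 => w _; rewrite lee_fin. Qed.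
Let cEE : \int[P]_w (E w)%:E = cE%:E.
Proof. by rewrite fineK //; exact: integrable_fin_num iE. Qed.
Let cSE : \int[P]_w (S w)%:E = cS%:E.
Proof. by rewrite fineK //; exact: integrable_fin_num iS. Qed.

(* Peel off S, then E, then V: each step extends [joint] from events to one more
   variable with [integral_mul_scale_from_preimages]. *)
Let integral_indic_mulS (U1 U2 : set R) : measurable U1 -> measurable U2 ->
  \int[P]_w (\1_(V @^-1` U1 `&` E @^-1` U2 `&` F) w * S w)%:E =
  P (V @^-1` U1 `&` E @^-1` U2 `&` F) * cS%:E.
Proof.
move=> mU1 mU2; set G := V @^-1` U1 `&` E @^-1` U2 `&` F.
have mG : measurable G.
  by apply: measurableI => //; apply: measurableI; exact: measurable_preimage.
rewrite (finite_measure mG) -cSE.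
transitivity ((fine (P G))%:E * \int[P]_w ((fun=> 1%R) w * S w)%:E); last first.
  by congr (_ * _); apply: eq_integral => w _; rewrite mul1r.
apply: integral_mul_scale_from_preimages => //; first exact: fine_ge0.
move=> U mU; have mSU : measurable (S @^-1` U) by exact: measurable_preimage.
rewrite integral_indic // integral_one // measure_of_probabilityE.
by rewrite -(finite_measure mG) /G setIAC joint // joint2 // muleAC.
Qed.

Let integral_indic_mulSE (U1 : set R) : measurable U1 ->
  \int[P]_w (\1_(V @^-1` U1 `&` F) w * S w * E w)%:E =
  (fine (P (V @^-1` U1 `&` F)) * cS)%:E * cE%:E.
Proof.
move=> mU1; set G := V @^-1` U1 `&` F.
have mG : measurable G by apply: measurableI => //; exact: measurable_preimage.
rewrite -cEE.
transitivity ((fine (P G) * cS)%:E * \int[P]_w ((fun=> 1%R) w * E w)%:E); last first.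
  by congr (_ * _); apply: eq_integral => w _; rewrite mul1r.
apply: integral_mul_scale_from_preimages => //.
- by apply: measurable_funM => //; exact: measurable_indic.
- by move=> w; rewrite mulr_ge0 // indicE.
- by rewrite mulr_ge0 // fine_ge0.
move=> U mU; have mEU : measurable (E @^-1` U) by exact: measurable_preimage.
rewrite [LHS]integral_mkcond_indic integral_one //.
transitivity (\int[P]_w (\1_(V @^-1` U1 `&` E @^-1` U `&` F) w * S w)%:E).
  have -> : V @^-1` U1 `&` E @^-1` U `&` F = E @^-1` U `&` G.
    by rewrite /G setIA [E @^-1` U `&` _]setIC.
  by apply: eq_integral => w _; rewrite mulrA indicM.
rewrite integral_indic_mulS // joint2 // (finite_measure mEU) (finite_measure mG).
by rewrite -!EFinM; congr EFin; ring.
Qed.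

Lemma integral_mul3_factor : \int[P]_(w in F) (V w * E w * S w)%:E =
  (cE * cS)%:E * \int[P]_(w in F) (V w)%:E.
Proof.
rewrite !(integral_mkcond_indic _ F).
transitivity (\int[P]_w ((\1_F w * S w * E w) * V w)%:E).
  by apply: eq_integral => w _; congr EFin; ring.
apply: integral_mul_scale_from_preimages => //.
- by do 2 apply: measurable_funM => //; exact: measurable_indic.
- by move=> w; rewrite !mulr_ge0 // indicE.
- exact: mulr_ge0.
move=> U mU; have mVU : measurable (V @^-1` U) by exact: measurable_preimage.
rewrite [LHS]integral_mkcond_indic.
transitivity (\int[P]_w (\1_(V @^-1` U `&` F) w * S w * E w)%:E).
  by apply: eq_integral => w _; rewrite !mulrA indicM.
rewrite integral_indic_mulSE // integral_indic // setIC measure_of_probabilityE.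
by rewrite (finite_measure (measurableI _ _ mF mVU)) /= -!EFinM; congr EFin; ring.
Qed.

End factorization.

Section conditional_independence.
Context {d dT : measure_display} {Om : measurableType d} {T : measurableType dT}
  {R : realType}.
Variables (P : probability Om R) (Z : Om -> T).
Hypothesis mZ : measurable_fun setT Z.
HB.instance Definition _ := isMeasurableFun.Build _ _ _ _ Z mZ.
Local Open Scope ereal_scope.

Let mZpre (B : set T) : measurable B -> measurable (Z @^-1` B).
Proof. exact: measurable_preimage. Qed.

Lemma indep_cexp_indic_ae (Y : Om -> R) (U : set R) (g : T -> R) :
  measurable_fun setT Y -> measurable U -> indep_rv P Y Z ->
  cexp_version P (\1_(Y @^-1` U)) Z g ->
  ae_eq (distribution P Z) setT (EFin \o g) (cst (fine (P (Y @^-1` U)))%:E).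
Proof.
move=> mY mU YZ [mg ig hg].
have mYU : measurable (Y @^-1` U) by exact: measurable_preimage.
have mgE : measurable_fun setT (EFin \o g) by exact/measurable_EFinP.
have igZ : (distribution P Z).-integrable setT (EFin \o g).
  exact: integrable_pushforward.
apply: integral_ae_eq => // C _ mC; have mZC := mZpre mC.
rewrite (integral_pushforward mZ) //; last exact: integrableS ig.
rewrite -hg // integral_indic //.
apply: eq_trans (esym (integral_cst _ mC _)).
by rewrite fineK ?fin_num_measure //; exact: YZ.
Qed.

Lemma integral_comp_ae_cstM (f h : T -> R) (c : R) (B : set T) :
  measurable B -> measurable_fun setT f -> measurable_fun setT h ->
  P.-integrable (Z @^-1` B) (EFin \o (f \o Z)) ->
  P.-integrable (Z @^-1` B) (EFin \o ((f \* h)%R \o Z)) ->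
  ae_eq (distribution P Z) setT (EFin \o h) (cst c%:E) ->
  \int[P]_(w in Z @^-1` B) (f (Z w) * h (Z w))%:E
    = c%:E * \int[P]_(w in Z @^-1` B) (f (Z w))%:E.
Proof.
move=> mB mf mh if_ ifh hc.
have mfE : measurable_fun setT (EFin \o f) by exact/measurable_EFinP.
have mfhE : measurable_fun setT (EFin \o (f \* h)%R).
  by apply/measurable_EFinP; exact: measurable_funM.
rewrite -(integral_pushforward mZ mfhE ifh mB) -(integral_pushforward mZ mfE if_ mB).
rewrite -integralZl //; last exact: integrable_pushforward.
apply: ae_eq_integral => //.
- exact: measurable_funTS.
- by apply: measurable_funTS; apply: emeasurable_funM => //; exact: measurable_cst.
- apply: filterS hc => z /(_ I) /= [->] _.
  by rewrite EFinM muleC.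
Qed.

Lemma cond_indep3_joint (V E S : Om -> R) (U1 U2 U3 : set R) (B : set T) :
  measurable_fun setT V -> measurable_fun setT E -> measurable_fun setT S ->
  measurable U1 -> measurable U2 -> measurable U3 -> measurable B ->
  cond_mutual_indep3 P V E S Z -> indep_rv P E Z -> indep_rv P S Z ->
  P (V @^-1` U1 `&` E @^-1` U2 `&` S @^-1` U3 `&` Z @^-1` B) =
  P (E @^-1` U2) * P (S @^-1` U3) * P (V @^-1` U1 `&` Z @^-1` B).
Proof.
move=> mV mE mS mU1 mU2 mU3 mB VESZ EZ SZ.
have [g1 [g2 [g3 [[mg1 ig1 hg1] c2 c3 [_ ig123 hg123]]]]] := VESZ U1 U2 U3 mU1 mU2 mU3.
have mg2 : measurable_fun setT g2 by case: c2.
have mg3 : measurable_fun setT g3 by case: c3.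
have ae23 : ae_eq (distribution P Z) setT (EFin \o (g2 \* g3)%R)
    (cst (fine (P (E @^-1` U2)) * fine (P (S @^-1` U3)))%:E).
  move: (indep_cexp_indic_ae mE mU2 EZ c2) (indep_cexp_indic_ae mS mU3 SZ c3).
  by apply: filterS2 => z /(_ I) /= [->] /(_ I) /= [->] _.
have mVESpre : measurable (V @^-1` U1 `&` E @^-1` U2 `&` S @^-1` U3).
  by apply: measurableI; [apply: measurableI|]; exact: measurable_preimage.
have mZB := mZpre mB.
rewrite -integral_indic // hg123 //.
rewrite (eq_integral (fun w => (g1 (Z w) * (g2 \* g3)%R (Z w))%:E)); last first.
  by move=> w _; rewrite /= mulrA.
rewrite (integral_comp_ae_cstM mB mg1 (measurable_funM mg2 mg3) _ _ ae23); first last.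
- have ig : P.-integrable setT (EFin \o ((g1 \* (g2 \* g3))%R \o Z)).
    by apply: eq_integrable ig123 => // w _ /=; rewrite mulrA.
  by apply: integrableS ig.
- by apply: integrableS ig1.
rewrite -hg1 // integral_indic //; last exact: measurable_preimage.
by rewrite EFinM !fineK ?fin_num_measure //; exact: measurable_preimage.
Qed.
End conditional_independence.

Section same_law.
Context {d dT : measure_display} {Om : measurableType d} {T : measurableType dT}
  {R : realType}.
Variables (P1 P2 : probability Om R) (O : Om -> T).
Hypothesis mO : measurable_fun setT O.
Hypothesis lawO : forall D, measurable D -> P1 (O @^-1` D) = P2 (O @^-1` D).
Local Open Scope ereal_scope.

Lemma ge0_integral_same_law (f : T -> \bar R) (D : set T) :
  measurable D -> measurable_fun setT f -> (forall x, 0 <= f x) ->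
  \int[P1]_(w in O @^-1` D) (f \o O) w = \int[P2]_(w in O @^-1` D) (f \o O) w.
Proof.
move=> mD mf f0; have mfD := measurable_funTS (D := D) mf.
rewrite -!(ge0_integral_pushforward mO) //.
by apply: eq_measure_integral => B mB _; exact: lawO.
Qed.

Lemma integrable_same_law (f : T -> R) (D : set T) :
  measurable D -> measurable_fun setT f ->
  P1.-integrable (O @^-1` D) (EFin \o (f \o O)) ->
  P2.-integrable (O @^-1` D) (EFin \o (f \o O)).
Proof.
move=> mD mf /integrableP[_ if1]; apply/integrableP; split.
  by apply/measurable_funTS/measurable_EFinP; exact: measurableT_comp.
rewrite -(ge0_integral_same_law (f := fun x => `|(f x)%:E|)) //.
by apply/measurableT_comp => //; exact/measurable_EFinP.
Qed.

Lemma integral_same_law (f : T -> R) (D : set T) :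
  measurable D -> measurable_fun setT f ->
  P1.-integrable (O @^-1` D) (EFin \o (f \o O)) ->
  \int[P1]_(w in O @^-1` D) (f (O w))%:E = \int[P2]_(w in O @^-1` D) (f (O w))%:E.
Proof.
move=> mD mf if1; have mfE : measurable_fun setT (EFin \o f) by exact/measurable_EFinP.
have if2 := integrable_same_law mD mf if1.
rewrite -(integral_pushforward mO mfE if1 mD) -(integral_pushforward mO mfE if2 mD).
by apply: eq_measure_integral => B mB _; exact: lawO.
Qed.

Lemma cexp_version_same_law_scale (Y Y' : Om -> R) (g : T -> R) (c1 c2 : R) :
  c2 != 0%R ->
  (forall B, measurable B ->
    \int[P1]_(w in O @^-1` B) (Y' w)%:E = \int[P2]_(w in O @^-1` B) (Y' w)%:E) ->
  (forall B, measurable B ->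
    \int[P1]_(w in O @^-1` B) (Y' w)%:E = c1%:E * \int[P1]_(w in O @^-1` B) (Y w)%:E) ->
  (forall B, measurable B ->
    \int[P2]_(w in O @^-1` B) (Y' w)%:E = c2%:E * \int[P2]_(w in O @^-1` B) (Y w)%:E) ->
  cexp_version P1 Y O g -> cexp_version P2 Y O (fun z => c1 / c2 * g z)%R.
Proof.
move=> c2_neq0 Y'12 Y'1 Y'2 [mg ig hg].
have ig2 B : measurable B -> P2.-integrable (O @^-1` B) (EFin \o (g \o O)).
  move=> mB; have mOB := measurable_preimage mO mB.
  by apply: (integrable_same_law mB mg); apply: integrableS ig.
split.
- by apply: measurable_funM => //; exact: measurable_cst.
- by apply: eq_integrable (integrableZl measurableT (c1 / c2) (ig2 _ measurableT)).
move=> B mB; have mOB : measurable (O @^-1` B) by exact: measurable_preimage.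
have -> : \int[P2]_(w in O @^-1` B) (Y w)%:E =
    (c2^-1)%:E * \int[P2]_(w in O @^-1` B) (Y' w)%:E.
  by rewrite Y'2 // muleA -EFinM mulVf // mul1e.
rewrite -Y'12 // Y'1 // hg // (integral_same_law mB mg); last exact: integrableS ig.
rewrite muleA -EFinM -integralZl; [|exact: mOB|exact: ig2].
by apply: eq_integral => w _; rewrite -EFinM [(c2^-1 * c1)%R]mulrC.
Qed.

End same_law.

Lemma sigma_algebra_preimage_pair {d d1 d2 : measure_display} {Om : measurableType d}
    {T1 : measurableType d1} {T2 : measurableType d2}
    (G : set (set Om)) (O1 : Om -> T1) (O2 : Om -> T2) :
  sigma_algebra setT G ->
  (forall B, measurable B -> G (O1 @^-1` B)) ->
  (forall B, measurable B -> G (O2 @^-1` B)) ->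
  forall D, measurable D -> G ((fun w => (O1 w, O2 w)) @^-1` D).
Proof.
move=> sG G1 G2 D mD.
suff : image_set_system setT (fun w => (O1 w, O2 w)) G D.
  by rewrite /image_set_system /= setTI.
move: D mD; apply: smallest_sub; first exact: sigma_algebra_image.
move=> D [] [B mB <-{D}]; rewrite /image_set_system /= !setTI.
- by have := G1 B mB; congr G.
- by have := G2 B mB; congr G.
Qed.

Lemma fine_integral_gt0 {d : measure_display} {Om : measurableType d} {R : realType}
    (P : probability Om R) (f : Om -> R) :
  measurable_fun setT f -> (forall w, 0 < f w) -> P.-integrable setT (EFin \o f) ->
  0 < fine (\int[P]_w (f w)%:E).
Proof.
move=> mf f0 if_; apply: fine_gt0; apply/andP; split; last first.
  by have /fin_numPlt/andP[_] := integrable_fin_num measurableT if_.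
rewrite lt_neqAle integral_ge0 ?andbT; last by move=> w _; rewrite lee_fin ltW.
apply/negP => /eqP /esym int0.
have : (\int[P]_(w in setT) `|(EFin \o f) w| = 0)%E.
  by rewrite -int0; apply: eq_integral => w _; rewrite gee0_abs // lee_fin ltW.
have mfE : measurable_fun setT (EFin \o f) by exact/measurable_EFinP.
move/(ae_eq_integral_abs P measurableT mfE) => [N [mN PN0 fN]].
have : (P setT <= P N)%E.
  apply: le_measure; rewrite ?inE //.
  by move=> w _; apply: fN => /= /(_ I) [] /eqP; rewrite gt_eqF.
by rewrite PN0 probability_setT lee_fin ler10.
Qed.

Definition measurement_factor {d : measure_display} {Om : measurableType d} {R : realType}
    (P : probability Om R) (Ej S : Om -> R) : R :=
  fine (\int[P]_w (Ej w)%:E) * fine (\int[P]_w (S w)%:E).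

Section model.
Context {R : realType} {d dX : measure_display} {Om : measurableType d}
  {TX : measurableType dX}.
Variables (J : nat) (W V E : 'I_J -> Om -> R) (S : Om -> R) (A : Om -> bool)
  (X : Om -> TX) (j : 'I_J).
Hypotheses (mW : forall j, measurable_fun setT (W j))
  (mV : forall j, measurable_fun setT (V j)) (mE : forall j, measurable_fun setT (E j))
  (mS : measurable_fun setT S) (mA : measurable_fun setT A) (mX : measurable_fun setT X).
Hypotheses (V_ge0 : forall j w, 0 <= V j w) (E_gt0 : forall j w, 0 < E j w)
  (S_gt0 : forall w, 0 < S w).
Local Open Scope ereal_scope.

Let Z w := (A w, X w).
Let mZ : measurable_fun setT Z. Proof. exact: measurable_fun_pair. Qed.

Lemma measurement_factor_gt0 (P : probability Om R) :
  model_assumptions W V E S A X P -> (0 < measurement_factor P (E j) S)%R.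
Proof.
move=> /(_ j) [[_ _ iE iS _] _].
by rewrite mulr_gt0 // fine_integral_gt0.
Qed.

Lemma model_integral_W (P : probability Om R) (B : set (bool * TX)) :
  model_assumptions W V E S A X P -> measurable B ->
  \int[P]_(w in Z @^-1` B) (W j w)%:E =
  (measurement_factor P (E j) S)%:E * \int[P]_(w in Z @^-1` B) (V j w)%:E.
Proof.
move=> /(_ j) [[_ _ iE iS _] [[g [[_ _ hW] [_ _ hVES]]] VESZ EZ SZ]] mB.
rewrite hW // -hVES //; apply: integral_mul3_factor => //.
- exact: measurable_preimage.
- by move=> w; exact/ltW.
- by move=> w; exact/ltW.
- by move=> U1 U2 U3 mU1 mU2 mU3; exact: cond_indep3_joint.
Qed.

Variables (P1 P2 : probability Om R).
Hypothesis obs : same_observed_law W A X P1 P2.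

Let observed_sigma_algebra : sigma_algebra setT (observed_events W A X).
Proof. exact: smallest_sigma_algebra. Qed.

Lemma observed_law_AX (D : set (bool * TX)) : measurable D ->
  P1 (Z @^-1` D) = P2 (Z @^-1` D).
Proof.
move=> mD; apply: obs; apply: sigma_algebra_preimage_pair => // B mB.
- by apply: sub_sigma_algebra; right; left; exists B.
- by apply: sub_sigma_algebra; right; right; exists B.
Qed.

Lemma observed_integral_W (B : set (bool * TX)) : measurable B ->
  P1.-integrable setT (EFin \o W j) ->
  \int[P1]_(w in Z @^-1` B) (W j w)%:E = \int[P2]_(w in Z @^-1` B) (W j w)%:E.
Proof.
move=> mB iW.
have lawWZ D : measurable D ->
    P1 ((fun w => (W j w, Z w)) @^-1` D) = P2 ((fun w => (W j w, Z w)) @^-1` D).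
  move=> mD; apply: obs; apply: sigma_algebra_preimage_pair => // C mC.
    by apply: sub_sigma_algebra; left; exists j, C.
  apply: sigma_algebra_preimage_pair => // C' mC'; apply: sub_sigma_algebra.
    by right; left; exists C'.
  by right; right; exists C'.
have mWZ : measurable_fun setT (fun w => (W j w, Z w)) by exact: measurable_fun_pair.
have mD : measurable (setT `*` B : set (R * (bool * TX))) by exact: measurableX.
have -> : Z @^-1` B = (fun w => (W j w, Z w)) @^-1` (setT `*` B).
  by apply/seteqP; split => w //= [].
have iWZ : P1.-integrable ((fun w => (W j w, Z w)) @^-1` (setT `*` B))
    (EFin \o (fst \o (fun w => (W j w, Z w)))).
  by apply: integrableS iW => //; exact: measurable_preimage.
exact: (integral_same_law mWZ lawWZ mD measurable_fst iWZ).
Qed.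

Lemma outer_mean_same_law (g : bool * TX -> R) (c : R) (a : bool) :
  measurable_fun setT g -> P1.-integrable setT (fun w => (g (a, X w))%:E) ->
  outer_mean P2 X (fun z => c * g z)%R a = c%:E * outer_mean P1 X g a.
Proof.
move=> mg ig.
have mga : measurable_fun setT (fun z : bool * TX => g (a, z.2)).
  by apply: measurableT_comp => //; exact: measurable_fun_pair.
have := integrable_same_law mZ observed_law_AX measurableT mga ig.
have := integral_same_law mZ observed_law_AX measurableT mga ig.
rewrite /outer_mean => -> ig2; rewrite -integralZl //.
exact: measurableT.
Qed.

End model.

Theorem mainTheorem3
    (R : realType) (d : measure_display) (Om : measurableType d)
    (dX : measure_display) (TX : measurableType dX)
    (J : nat) (W V E : 'I_J -> Om -> R) (S : Om -> R)
    (A : Om -> bool) (X : Om -> TX)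
    (mW : forall j, measurable_fun setT (W j))
    (mV : forall j, measurable_fun setT (V j))
    (mE : forall j, measurable_fun setT (E j))
    (mS : measurable_fun setT S)
    (mA : measurable_fun setT A) (mX : measurable_fun setT X)
    (W_ge0 : forall j w, 0 <= W j w) (V_ge0 : forall j w, 0 <= V j w)
    (E_gt0 : forall j w, 0 < E j w) (S_gt0 : forall w, 0 < S w)
    (j : 'I_J) (P1 P2 : probability Om R) :
  model_assumptions W V E S A X P1 ->
  model_assumptions W V E S A X P2 ->
  psi2_well_defined P1 (V j) A X ->
  psi2_well_defined P2 (V j) A X ->
  same_observed_law W A X P1 P2 ->
  forall g1 g2 : bool * TX -> R,
    cexp_version P1 (V j) (fun w => (A w, X w)) g1 ->
    cexp_version P2 (V j) (fun w => (A w, X w)) g2 ->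
    psi2 P1 X g1 = psi2 P2 X g2.
Proof.
move=> M1 M2 [m1 [m0 [_ m0_gt0 WD1]]] [n1 [n0 [_ _ WD2]]] obs g1 g2 vg1 vg2.
have k1_gt0 := measurement_factor_gt0 j mE mS E_gt0 S_gt0 M1.
have k2_gt0 := measurement_factor_gt0 j mE mS E_gt0 S_gt0 M2.
set k := measurement_factor P1 (E j) S / measurement_factor P2 (E j) S.
have vg12 : cexp_version P2 (V j) (fun w => (A w, X w)) (fun z => k * g1 z).
  have [[iW1 _ _ _ _] _] := M1 j.
  apply: (cexp_version_same_law_scale _ (observed_law_AX obs) (Y' := W j)) => //.
  - exact: measurable_fun_pair.
  - by rewrite gt_eqF.
  - by move=> B mB; exact: observed_integral_W.
  - by move=> B mB; exact: model_integral_W.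
  - by move=> B mB; exact: model_integral_W.
have mg1 : measurable_fun setT g1 by case: vg1.
have [i1 i0 e1 e0] := WD1 g1 vg1.
have [_ _ f1 f0] := WD2 g2 vg2.
have [_ _ kf1 kf0] := WD2 _ vg12.
rewrite (outer_mean_same_law mA mX obs _ mg1 i1) e1 -EFinM in kf1.
rewrite (outer_mean_same_law mA mX obs _ mg1 i0) e0 -EFinM in kf0.
rewrite /psi2 e1 e0 f1 f0 -kf1 -kf0 /=; congr ln; field.
by rewrite !gt_eqF ?divr_gt0.
Qed.
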